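(* Let $\Pi_n=\{\pi_1,\ldots,\pi_n\}$ be a finite set of policies of a discrete mean-field game (setting in the context) and suppose $J$ is $\mu$-diff-affine. Let $M\in\mathbb R^{n\times n}$ with $M_{ij}=J(\pi_i,\mu^{\pi_j})$ and consider the symmetric two-player normal-form game where player 1 has payoff matrix $M$ and player 2 has payoff matrix $M^\top$. If $\nu\in\Delta(\{1,\ldots,n\})$ is a symmetric Nash equilibrium of this game (i.e. $e_k^\top M\nu\le\nu^\top M\nu$ for all $k$), then, viewing $\nu$ as a distribution over $\Pi_n$, $\nu$ is a Nash equilibrium of the restricted mean-field game: $J(\pi_k,\mu(\nu))-J(\pi(\nu),\mu(\nu))\le0$ for all $k=1,\ldots,n$.
   Context: A discrete mean-field game consists of finite state set $\mathcal X$, finite action set $\mathcal A$, reward $r:\mathcal X\times\mathcal A\times\Delta(\mathcal X)\to\mathbb R$, transitions $p(x'\mid x,a)$ independent of the population distribution, initial distribution $\mu_0$. A policy is $\pi:\mathcal X\to\Delta(\mathcal A)$; $\mu^\pi$ is its state occupancy measure (discounted or finite-horizon); $J(\pi,\mu)=\sum_{x,a}\mu^\pi(x)\pi(x,a)r(x,a,\mu)$. For $\nu\in\Delta(\Pi_n)$, $\mu(\nu)=\sum_j\nu(\pi_j)\mu^{\pi_j}$ and $J(\pi(\nu),\mu)=\sum_i\nu(\pi_i)J(\pi_i,\mu)$, where $\pi(\nu)$ samples a policy from $\nu$ at the start and plays it. $J$ is $\mu$-diff-affine if for all policies $\pi,\pi'$ the map $\mu\mapsto J(\pi,\mu)-J(\pi',\mu)$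 is affine. *)

From HB Require Import structures.
From mathcomp Require Import all_boot all_order all_algebra.
Set Implicit Arguments. Unset Strict Implicit. Unset Printing Implicit Defensive.
Import Order.TTheory GRing.Theory Num.Theory.
Local Open Scope ring_scope.

Section MFG.
Variable R : realFieldType.

Definition is_dist (T : finType) (d : {ffun T -> R}) : Prop :=
  (forall t, 0 <= d t) /\ \sum_t d t = 1.

Variables (X A : finType).

(* transitions p(x'|x,a) = p x a x' *)
Definition is_kernel (p : X -> A -> {ffun X -> R}) : Prop :=
  forall x a, is_dist (p x a).

Definition policy := {ffun X -> {ffun A -> R}}.
Definition is_policy (pi : policy) : Prop := forall x, is_dist (pi x).

Definition Pmat (p : X -> A -> {ffun X -> R}) (pi : policy) : 'M[R]_#|X| :=
  \matrix_(i, j) \sum_a pi (enum_val i) a * p (enum_val i) a (enum_val j).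

Definition row_of (d : {ffun X -> R}) : 'rV[R]_#|X| := \row_j d (enum_val j).
Definition fun_of_row (v : 'rV[R]_#|X|) : {ffun X -> R} :=
  [ffun x => v 0 (enum_rank x)].

Inductive occ_model := Discounted of R | FiniteHorizon of nat.

Definition valid_occ_model (m : occ_model) : Prop :=
  match m with
  | Discounted g => 0 <= g < 1
  | FiniteHorizon H => (0 < H)%N
  end.

(* state occupancy measure mu^pi:
   discounted:     (1-g) sum_t g^t mu0 P^t = (1-g) mu0 (I - g P)^{-1}
   finite horizon: (1/H) sum_{t<H} mu0 P^t *)
Definition occupancy (m : occ_model) (p : X -> A -> {ffun X -> R})
    (mu0 : {ffun X -> R}) (pi : policy) : {ffun X -> R} :=
  match m with
  | Discounted g =>
      fun_of_row ((1 - g) *: (row_of mu0 *m invmx (1%:M - g *: Pmat p pi)))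
  | FiniteHorizon H =>
      fun_of_row (H%:R^-1 *: \sum_(t < H) (row_of mu0 *m (Pmat p pi) ^+ t))
  end.

Definition Jv (m : occ_model) (p : X -> A -> {ffun X -> R}) (mu0 : {ffun X -> R})
    (r : X -> A -> {ffun X -> R} -> R) (pi : policy) (mu : {ffun X -> R}) : R :=
  \sum_x \sum_a occupancy m p mu0 pi x * pi x a * r x a mu.

Definition affine_on_simplex (f : {ffun X -> R} -> R) : Prop :=
  forall mu1 mu2 : {ffun X -> R}, is_dist mu1 -> is_dist mu2 ->
  forall t : R, 0 <= t <= 1 ->
    f [ffun x => t * mu1 x + (1 - t) * mu2 x] = t * f mu1 + (1 - t) * f mu2.

Definition mu_diff_affine (J : policy -> {ffun X -> R} -> R) : Prop :=
  forall pi pi' : policy, is_policy pi -> is_policy pi' ->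
    affine_on_simplex (fun mu => J pi mu - J pi' mu).

End MFG.

(* A mixed strategy nu over Pi_n induces the mean field mu(nu) = sum_j nu_j mu^{pi_j}.
   Since every occupancy measure lies in the simplex and J is mu-diff-affine,
   J(pi_k, mu(nu)) - J(pi_i, mu(nu)) = sum_j nu_j (M_kj - M_ij) = (M nu)_k - (M nu)_i.
   Averaging over i with weights nu turns the regret of pi_k against pi(nu) into
   (M nu)_k - nu^T M nu, which is nonpositive at a symmetric Nash equilibrium.

   The only delicate point is that occupancy measures are distributions: for the
   discounted model this needs 1 - g P to be invertible and the solution w of
   w = mu0 + g w P to be nonnegative, which both follow from the fact that a
   stochastic matrix cannot increase the total negative mass of a row vector. *)
From HB Require Import structures.
From mathcomp Require Import all_boot all_order all_algebra.
From mathcomp Require Import lra.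
Import Order.TTheory GRing.Theory Num.Theory.
Local Open Scope ring_scope.
Set Implicit Arguments. Unset Strict Implicit.

Section StochasticMatrix.
Variables (R : realFieldType) (N : nat).

Definition row_dist (v : 'rV[R]_N) : Prop :=
  (forall j, 0 <= v 0 j) /\ \sum_j v 0 j = 1.

Definition stochastic (P : 'M[R]_N) : Prop :=
  (forall i j, 0 <= P i j) /\ (forall i, \sum_j P i j = 1).

Variable P : 'M[R]_N.
Hypothesis P_stochastic : stochastic P.

Lemma sum_mul_stochastic (v : 'rV[R]_N) : \sum_j (v *m P) 0 j = \sum_i v 0 i.
Proof.
case: P_stochastic => _ P1.
under eq_bigr do rewrite mxE.
rewrite exchange_big /=; apply: eq_bigr => i _.
by rewrite -mulr_sumr P1 mulr1.
Qed.

Lemma row_dist_mul_stochastic (v : 'rV[R]_N) : row_dist v -> row_dist (v *m P).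
Proof.
case: P_stochastic => P0 _ [v0 v1]; split; last by rewrite sum_mul_stochastic.
by move=> j; rewrite mxE; apply: sumr_ge0 => i _; apply: mulr_ge0.
Qed.

Lemma row_dist_mul_exp (v : 'rV[R]_N) t : row_dist v -> row_dist (v *m P ^+ t).
Proof.
move=> v_dist; elim: t => [|t IHt]; first by rewrite expr0 mulmx1.
by rewrite exprSr -mulmxE mulmxA; apply: row_dist_mul_stochastic.
Qed.

Lemma neg_mass_le_mul_stochastic (w : 'rV[R]_N) (B : pred 'I_N) :
  \sum_(i | w 0 i < 0) w 0 i <= \sum_(j | B j) (w *m P) 0 j.
Proof.
case: P_stochastic => P0 P1.
under [X in _ <= X]eq_bigr do rewrite mxE.
rewrite exchange_big /= big_mkcond /=; apply: ler_sum => i _.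
rewrite -mulr_sumr.
have PB0 : 0 <= \sum_(j | B j) P i j by apply: sumr_ge0.
have PB1 : \sum_(j | B j) P i j <= 1.
  by rewrite -(P1 i) [X in _ <= X](bigID B) /= lerDl sumr_ge0.
case: ltP => [wi_lt0 | wi_ge0]; first by nra.
exact: mulr_ge0.
Qed.

Section Resolvent.
Variable g : R.
Hypothesis g_range : 0 <= g < 1.

(* If [w] had negative entries, [w = c + g w P] would force their total mass
   [S] to satisfy [S >= g S], i.e. [S >= 0]. *)
Lemma resolvent_fixpoint_ge0 (w c : 'rV[R]_N) :
  (forall j, 0 <= c 0 j) -> w = c + g *: (w *m P) -> forall j, 0 <= w 0 j.
Proof.
move=> c0 w_fix; case/andP: g_range => g0 g1.
set S := \sum_(j | w 0 j < 0) w 0 j.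
have S_ge_gS : g * S <= S.
  rewrite {2}/S [X in _ <= X](eq_bigr (fun j => c 0 j + g * (w *m P) 0 j));
    last by move=> j _; rewrite {1}w_fix !mxE.
  rewrite big_split /= -mulr_sumr -[X in X <= _]add0r.
  apply: lerD; first exact: sumr_ge0.
  exact/ler_wpM2l/neg_mass_le_mul_stochastic.
have S_ge0 : 0 <= S by nra.
move=> j; rewrite leNgt; apply/negP => wj_lt0.
have : S <= w 0 j.
  rewrite /S (bigD1 j) //= gerDl; apply: sumr_le0 => i /andP[wi_lt0 _].
  exact: ltW.
lra.
Qed.

Lemma sum_resolvent_fixpoint (w c : 'rV[R]_N) :
  w = c + g *: (w *m P) -> (1 - g) * \sum_j w 0 j = \sum_j c 0 j.
Proof.
move=> w_fix.
have : \sum_j w 0 j = \sum_j c 0 j + g * \sum_j w 0 j.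
  rewrite -{2}(sum_mul_stochastic w) mulr_sumr -big_split /=.
  by apply: eq_bigr => j _; rewrite {1}w_fix !mxE.
by move=> sum_fix; rewrite mulrBl mul1r {1}sum_fix addrK.
Qed.

Lemma resolvent_unitmx : 1%:M - g *: P \in unitmx.
Proof.
rewrite unitmxE unitfE; apply/negP => /det0P[v v_neq0].
rewrite mulmxBr mulmx1 -scalemxAr => /eqP; rewrite subr_eq0 => /eqP v_fix.
have zero_ge0 (j : 'I_N) : 0 <= (0 : 'rV[R]_N) 0 j by rewrite mxE.
have v_ge0 : forall j, 0 <= v 0 j.
  by apply: (resolvent_fixpoint_ge0 zero_ge0); rewrite add0r.
have Nv_ge0 : forall j, 0 <= (- v) 0 j.
  apply: (resolvent_fixpoint_ge0 zero_ge0).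
  by rewrite add0r mulNmx scalerN {1}v_fix.
move/eqP: v_neq0; apply; apply/matrixP => i j; rewrite ord1 mxE.
have := Nv_ge0 j; rewrite mxE oppr_ge0 => vj_le0.
by apply/eqP; rewrite eq_le v_ge0 vj_le0.
Qed.

End Resolvent.
End StochasticMatrix.

Section Occupancy.
Variables (R : realFieldType) (X A : finType).
Variables (p : X -> A -> {ffun X -> R}) (mu0 : {ffun X -> R}).
Hypotheses (p_kernel : is_kernel p) (mu0_dist : is_dist mu0).

Lemma sum_enum_val (F : X -> R) : \sum_(j < #|X|) F (enum_val j) = \sum_x F x.
Proof.
rewrite [RHS](reindex (@enum_val X predT)) //.
by apply: onW_bij; exact: enum_val_bij.
Qed.

Lemma row_dist_row_of (d : {ffun X -> R}) : is_dist d -> row_dist (row_of d).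
Proof.
case=> d0 d1; split; first by move=> j; rewrite mxE.
by rewrite -d1 -sum_enum_val; apply: eq_bigr => j _; rewrite mxE.
Qed.

Lemma is_dist_fun_of_row (v : 'rV[R]_#|X|) : row_dist v -> is_dist (fun_of_row v).
Proof.
case=> v0 v1; split; first by move=> x; rewrite ffunE.
by rewrite -v1 -sum_enum_val; apply: eq_bigr => j _; rewrite ffunE enum_valK.
Qed.

Lemma Pmat_stochastic (pi : policy R X A) : is_policy pi -> stochastic (Pmat p pi).
Proof.
move=> pi_policy; split.
  move=> i j; rewrite mxE; apply: sumr_ge0 => a _; apply: mulr_ge0.
    by case: (pi_policy (enum_val i)).
  by case: (p_kernel (enum_val i) a).
move=> i; under eq_bigr do rewrite mxE.
rewrite exchange_big /=; case: (pi_policy (enum_val i)) => _ <-.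
apply: eq_bigr => a _; rewrite -mulr_sumr sum_enum_val.
by case: (p_kernel (enum_val i) a) => _ ->; rewrite mulr1.
Qed.

Lemma row_dist_discounted N (P : 'M[R]_N) (c : 'rV[R]_N) g :
  stochastic P -> row_dist c -> 0 <= g < 1 ->
  row_dist ((1 - g) *: (c *m invmx (1%:M - g *: P))).
Proof.
move=> P_stochastic [c0 c1] g_range.
set w := c *m invmx _.
have w_fix : w = c + g *: (w *m P).
  have := mulmxKV (resolvent_unitmx P_stochastic g_range) c.
  by rewrite -/w mulmxBr mulmx1 -scalemxAr => <-; rewrite subrK.
have w_ge0 := resolvent_fixpoint_ge0 P_stochastic g_range c0 w_fix.
case/andP: g_range => _ g_lt1; split.
  by move=> j; rewrite mxE; apply: mulr_ge0 => //; rewrite subr_ge0 ltW.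
under eq_bigr do rewrite mxE.
by rewrite -mulr_sumr (sum_resolvent_fixpoint P_stochastic w_fix).
Qed.

Lemma row_dist_time_average N (P : 'M[R]_N) (c : 'rV[R]_N) (H : nat) :
  stochastic P -> row_dist c -> (0 < H)%N ->
  row_dist (H%:R^-1 *: \sum_(t < H) c *m P ^+ t).
Proof.
move=> P_stochastic c_dist H_gt0.
have ct_dist t := row_dist_mul_exp P_stochastic t c_dist.
split.
  move=> j; rewrite mxE summxE; apply: mulr_ge0; first by rewrite invr_ge0 ler0n.
  by apply: sumr_ge0 => t _; case: (ct_dist t).
under eq_bigr do rewrite mxE summxE.
rewrite -mulr_sumr exchange_big /=.
under eq_bigr do rewrite (proj2 (ct_dist _)).
by rewrite sumr_const card_ord -mulr_natl mulr1 mulVf // pnatr_eq0 -lt0n.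
Qed.

Lemma occupancy_dist (m : occ_model R) (pi : policy R X A) :
  valid_occ_model m -> is_policy pi -> is_dist (occupancy m p mu0 pi).
Proof.
move=> m_valid pi_policy.
have P_stochastic := Pmat_stochastic pi_policy.
have mu0_row := row_dist_row_of mu0_dist.
case: m m_valid => [g | H] /= m_valid; apply: is_dist_fun_of_row.
- exact: row_dist_discounted.
- exact: row_dist_time_average.
Qed.

End Occupancy.

Section Mixture.
Variables (R : realFieldType) (X : finType) (I : eqType).

Definition mixture (r : seq I) (a : I -> R) (mu : I -> {ffun X -> R}) : {ffun X -> R} :=
  [ffun x => \sum_(i <- r) a i * mu i x].

Lemma mixture_dist r a mu : (forall i, 0 <= a i) -> \sum_(i <- r) a i = 1 ->
  (forall i, is_dist (mu i)) -> is_dist (mixture r a mu).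
Proof.
move=> a_ge0 a_sum1 mu_dist; split.
  move=> x; rewrite ffunE; apply: sumr_ge0 => i _; apply: mulr_ge0 => //.
  by case: (mu_dist i).
under eq_bigr do rewrite ffunE.
rewrite exchange_big /= -a_sum1; apply: eq_bigr => i _.
by rewrite -mulr_sumr; case: (mu_dist i) => _ ->; rewrite mulr1.
Qed.

Lemma sum_cons_weight1 i r (a : I -> R) : (forall j, 0 <= a j) -> a i = 1 ->
  \sum_(j <- i :: r) a j = 1 -> forall F : I -> R,
  \sum_(j <- i :: r) a j * F j = F i.
Proof.
move=> a_ge0 ai1; rewrite big_cons ai1 -[X in _ = X]addr0 => /addrI.
move/eqP; rewrite psumr_eq0 // => /allP rest0 F.
rewrite big_cons ai1 mul1r big1_seq ?addr0 // => j /andP[_ /rest0 /eqP ->].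
by rewrite mul0r.
Qed.

(* Peel off the first weight: [mixture (i :: r) a mu] is the convex combination of
   [mu i] and the renormalised mixture of the rest, with weights [a i] and [1 - a i]. *)
Lemma affine_on_simplex_mixture (f : {ffun X -> R} -> R) mu :
  affine_on_simplex f -> (forall i, is_dist (mu i)) ->
  forall r a, (forall i, 0 <= a i) -> \sum_(i <- r) a i = 1 ->
  f (mixture r a mu) = \sum_(i <- r) a i * f (mu i).
Proof.
move=> f_aff mu_dist; elim=> [|i r IHr] a a_ge0 a_sum1.
  by move: a_sum1; rewrite big_nil => /eqP; rewrite eq_sym oner_eq0.
have [ai1 | ai_neq1] := eqVneq (a i) 1.
  have mix_i : mixture (i :: r) a mu = mu i.
    by apply/ffunP => x; rewrite ffunE (sum_cons_weight1 a_ge0 ai1 a_sum1).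
  by rewrite mix_i (sum_cons_weight1 a_ge0 ai1 a_sum1).
have rest_sum : \sum_(j <- r) a j = 1 - a i by move: a_sum1; rewrite big_cons; lra.
have rest_gt0 : 0 < 1 - a i.
  by rewrite lt_def subr_eq0 eq_sym ai_neq1 -rest_sum sumr_ge0.
set a' := fun j => a j / (1 - a i).
have a'_ge0 j : 0 <= a' j by apply: divr_ge0 => //; exact: ltW.
have a'_sum1 : \sum_(j <- r) a' j = 1 by rewrite -mulr_suml rest_sum divff ?gt_eqF.
have ai_range : 0 <= a i <= 1 by rewrite a_ge0 -subr_ge0 ltW.
have rescale j : a j = (1 - a i) * a' j by rewrite mulrC divfK ?gt_eqF.
clearbody a'.
have mix_split : mixture (i :: r) a mu =
    [ffun x => a i * mu i x + (1 - a i) * mixture r a' mu x].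
  apply/ffunP => x; rewrite !ffunE big_cons mulr_sumr; congr (_ + _).
  by apply: eq_bigr => j _; rewrite (rescale j) -mulrA.
have mix_rest_dist := mixture_dist a'_ge0 a'_sum1 mu_dist.
rewrite mix_split (f_aff _ _ (mu_dist i) mix_rest_dist _ ai_range) (IHr a') //.
rewrite big_cons mulr_sumr; congr (_ + _); apply: eq_bigr => j _.
by rewrite (rescale j) mulrA.
Qed.

End Mixture.

Lemma weighted_regret (R : pzRingType) (I : finType) (w f : I -> R) (k : I) :
  \sum_i w i = 1 -> f k - \sum_i w i * f i = \sum_i w i * (f k - f i).
Proof.
move=> w_sum1.
by rewrite (eq_bigr _ (fun i _ => mulrBr _ _ _)) sumrB -mulr_suml w_sum1 mul1r.
Qed.

Theorem mainTheorem8 (R : realFieldType) (X A : finType)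
  (r : X -> A -> {ffun X -> R} -> R) (p : X -> A -> {ffun X -> R})
  (mu0 : {ffun X -> R}) (m : occ_model R)
  (Hp : is_kernel p) (Hmu0 : is_dist mu0) (Hm : valid_occ_model m)
  (n : nat) (Pi : 'I_n -> policy R X A)
  (HPi : forall i, is_policy (Pi i)) (HPi_inj : injective Pi)
  (Haff : mu_diff_affine (Jv m p mu0 r))
  (nu : 'cV[R]_n) (Hnu : is_dist [ffun i => nu i 0]) :
  let J := Jv m p mu0 r in
  let M : 'M[R]_n := \matrix_(i, j) J (Pi i) (occupancy m p mu0 (Pi j)) in
  (forall k : 'I_n, (M *m nu) k 0 <= (nu^T *m M *m nu) 0 0) ->
  let mu_nu : {ffun X -> R} := [ffun x => \sum_j nu j 0 * occupancy m p mu0 (Pi j) x] in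
  forall k : 'I_n,
    J (Pi k) mu_nu - \sum_i nu i 0 * J (Pi i) mu_nu <= 0.
Proof.
move=> J M symmetric_NE mu_nu k.
have occ_dist j := occupancy_dist Hp Hmu0 Hm (HPi j).
have nu_ge0 j : 0 <= nu j 0 by case: Hnu => nu_ge0 _; have := nu_ge0 j; rewrite ffunE.
have nu_sum1 : \sum_j nu j 0 = 1.
  by case: Hnu => _ <-; apply: eq_bigr => j _; rewrite ffunE.
have J_diff i : J (Pi k) mu_nu - J (Pi i) mu_nu = (M *m nu) k 0 - (M *m nu) i 0.
  have := affine_on_simplex_mixture (Haff _ _ (HPi k) (HPi i)) occ_dist nu_ge0 nu_sum1.
  rewrite /= -/mu_nu => ->; rewrite !mxE -sumrB; apply: eq_bigr => j _.
  by rewrite /M !mxE mulrC mulrBl.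
have value_eq : (nu^T *m M *m nu) 0 0 = \sum_i nu i 0 * (M *m nu) i 0.
  by rewrite -mulmxA mxE; apply: eq_bigr => i _; rewrite mxE.
rewrite weighted_regret // (eq_bigr _ (fun i _ => congr1 (GRing.mul _) (J_diff i))).
by rewrite -weighted_regret // -value_eq subr_le0.
Qed.
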